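(* Let $X$ be a Fréchet space, $(T(t))_{t\geqslant0}$ an exponentially equicontinuous $C_0$-semigroup on $X$, and let $\Gamma$ be a fundamental system of seminorms for $X$ for which there exist $\omega\in\mathbb{R}$ and $M\geqslant1$ with $q(T(t)x)\leqslant Me^{\omega t}q(x)$ for all $q\in\Gamma$, $t\geqslant0$, $x\in X$. Then for every $t_0>0$, \[\omega_{0,\Gamma}(T)=\inf_{t>0}\tfrac{1}{t}\log\|T(t)\|_\Gamma=\lim_{t\to\infty}\tfrac1t\log\|T(t)\|_\Gamma=\tfrac{1}{t_0}\log\Big(\lim_{n\to\infty}\|T(t_0)^n\|_\Gamma^{1/n}\Big).\]
   Context: A Fréchet space is a complete metrizable locally convex space; a fundamental system of seminorms is a set of continuous seminorms generating the topology. A $C_0$-semigroup is a family $(T(t))_{t\geqslant0}$ of continuous linear operators on $X$ with $T(0)=\mathrm{id}_X$, $T(t+s)=T(t)T(s)$, and $t\mapsto T(t)x$ continuous for every $x$; it is exponentially equicontinuous if for some $\omega\in\mathbb{R}$ the family $\{e^{-\omega t}T(t)\}_{t\geqslant0}$ is equicontinuous. For $S\in L(X)$ put $\|S\|_\Gamma=\sup_{q\in\Gamma}\sup_{x\in X,\,q(x)\leqslant1}q(Sx)$. Define \[\omega_{0,\Gamma}(T)=\inf\{\omega\in\mathbb{R}: \exists M\geqslant1\ \forall q\in\Gamma,\,t\geqslant0,\,x\in X:\ q(T(t)x)\leqslant Me^{\omega t}q(x)\}.\] *)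

From HB Require Import structures.
From mathcomp Require Import all_boot all_order all_algebra.
From mathcomp Require Import all_classical all_reals all_analysis.
Set Implicit Arguments. Unset Strict Implicit. Unset Printing Implicit Defensive.
Import Order.TTheory GRing.Theory Num.Theory numFieldNormedType.Exports.
Local Open Scope classical_set_scope.
Local Open Scope ring_scope.

Section Defs.
Context {R : realType} {X : tvsType R}.

(** Fréchet space: a (locally convex) tvs which is complete (every Cauchy
    proper filter converges) and metrizable (Hausdorff with a countable
    neighbourhood base at 0; Birkhoff-Kakutani). *)
Definition frechet_space : Prop :=
  [/\ hausdorff_space X,
      (exists B : nat -> set X, (forall n, nbhs (0 : X) (B n)) /\
         (forall U, nbhs (0 : X) U -> exists n, B n `<=` U)) &
      (forall F : set_system X, ProperFilter F -> @cauchy X F -> exists x : X, F --> x)].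

Definition seminorm (p : X -> R) : Prop :=
  (forall x y, p (x + y) <= p x + p y) /\ (forall (k : R) x, p (k *: x) = `|k| * p x).

Definition fundamental_system (Gamma : set (X -> R)) : Prop :=
  (forall q, Gamma q -> seminorm q /\ continuous q) /\
  (forall U, nbhs (0 : X) U ->
     exists (n : nat) (qs : 'I_n -> X -> R) (e : R),
       [/\ (forall i, Gamma (qs i)), 0 < e &
        [set x | forall i, qs i x < e] `<=` U]).

(** C0-semigroup (T t only matters for t >= 0). *)
Definition C0_semigroup (T : R -> X -> X) : Prop :=
  [/\ (forall t, 0 <= t -> (forall (a : R) x y, T t (a *: x + y) = a *: T t x + T t y) /\ continuous (T t)),
      T 0 = id,
      (forall t s, 0 <= t -> 0 <= s -> T (t + s) = T t \o T s) &
      (forall x, {within `[0, +oo[, continuous (fun t => T t x)})].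

(** exponential equicontinuity: {e^{-wt} T(t)}_{t>=0} is equicontinuous
    (same formulation as the library's [equicontinuous], w.r.t. the uniform
    structure of X). *)
Definition exp_equicontinuous (T : R -> X -> X) : Prop :=
  exists w : R, forall (x : X) (E : set (X * X)), entourage E ->
    \forall y \near x, forall t : R, 0 <= t ->
       E (expR (- w * t) *: T t x, expR (- w * t) *: T t y).

Definition normG (Gamma : set (X -> R)) (S : X -> X) : \bar R :=
  ereal_sup [set y | exists q x, [/\ Gamma q, q x <= 1 & y = (q (S x))%:E]].

Definition omega0 (Gamma : set (X -> R)) (T : R -> X -> X) : \bar R :=
  ereal_inf [set w%:E | w in [set w : R | exists2 M : R, 1 <= M &
     forall q t x, Gamma q -> 0 <= t -> q (T t x) <= M * expR (w * t) * q x]].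

End Defs.

From HB Require Import structures.
From mathcomp Require Import all_boot all_order all_algebra.
From mathcomp Require Import all_classical all_reals all_analysis lra.
Import Order.TTheory GRing.Theory Num.Theory numFieldNormedType.Exports.
Local Open Scope classical_set_scope.
Local Open Scope ring_scope.
Set Implicit Arguments. Unset Strict Implicit.

(* If ||T(t)||_Gamma < e^(w t) for a single t > 0, the seminorm estimate
   q(T(t)y) <= e^(w t) q(y) can be iterated along s = n t + r, with the a priori
   bound on [0, t[ for the remainder, giving q(T(s)x) <= M e^(w s) q(x) for all
   s >= 0; hence omega_0 <= (1/t) log ||T(t)||_Gamma for every t > 0.
   Conversely, each bound q(T(t)x) <= M e^(w t) q(x) gives
   (1/t) log ||T(t)||_Gamma <= w + (log M)/t, which tends to w.  So omega_0 is
   both the infimum and the limit of (1/t) log ||T(t)||_Gamma, and the last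
   formula follows from ||T(t0)^n||^(1/n) = exp(t0 (1/(n t0)) log ||T(n t0)||). *)

Section ExtendedReals.
Context {R : realType}.
Local Open Scope ereal_scope.

Lemma lne_le_ln (x : \bar R) (r : R) : (0 < r)%R -> x <= r%:E -> lne x <= (ln r)%:E.
Proof.
move=> r0; case: x => [s||] //= sr; last exact: leNye.
have [s0|s0] := leP s 0%R; first exact: leNye.
by rewrite lee_fin ler_ln ?posrE.
Qed.

Lemma lt_expR_of_lne_lt (x : \bar R) (r : R) : lne x < r%:E -> x < (expR r)%:E.
Proof.
case: x => [s||] //=; last by move=> _; exact: ltNyr.
have [s0 _|s0] := leP s 0%R; first by rewrite lte_fin (le_lt_trans s0) ?expR_gt0.
by rewrite !lte_fin => h; rewrite -(lnK s0) ltr_expR.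
Qed.

Lemma lee_EFin_ub (x y : \bar R) :
  (forall r : R, y < r%:E -> x <= r%:E) -> x <= y.
Proof.
case: y => [s||] Hub; last 2 first.
- exact: leey.
- case: x Hub => [a||] Hub //; last by have := Hub 0%R (ltNyr _).
  move: (Hub (a - 1)%R (ltNyr _)).
  by rewrite lee_fin -subr_ge0 addrAC subrr add0r oppr_ge0 ler10.
apply/lee_addgt0Pr => e e0; apply: Hub.
by rewrite lte_fin ltrDl.
Qed.

Lemma cvge_lbound_ubounds {T : Type} (F : set_system T) {FF : Filter F}
    (u : T -> \bar R) (l : \bar R) :
  l != +oo -> (\forall t \near F, l <= u t) ->
  (forall r : R, l < r%:E -> \forall t \near F, u t <= r%:E) ->
  u @ F --> l.
Proof.
case: l => [a| |] // _ Hlow Hup; last first.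
  by apply/cvgeNyPle => A; apply: Hup; exact: ltNyr.
have Hup1 := Hup (a + 1)%R; rewrite lte_fin ltrDl ltr01 in Hup1.
apply/fine_cvgP; split.
  near=> t.
  have h1 : a%:E <= u t by near: t.
  have h2 : u t <= (a + 1)%:E by near: t; exact: Hup1.
  by rewrite fin_numElt (lt_le_trans (ltNyr a) h1) (le_lt_trans h2 (ltry _)).
apply/cvgrPdist_lt => e e0.
have Hupe := Hup (a + e / 2)%R; rewrite lte_fin ltrDl divr_gt0 // in Hupe.
near=> t.
have h1 : a%:E <= u t by near: t.
have h2 : u t <= (a + e / 2)%:E by near: t; exact: Hupe.
rewrite /=; move: h1 h2; case: (u t) => [g||] //=; rewrite !lee_fin => h1 h2.
rewrite ltr_distl; apply/andP; split; lra.
Unshelve. all: end_near. Qed.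

Lemma cvg_expeR {T : Type} (F : set_system T) {FF : Filter F}
    (u : T -> \bar R) (l : \bar R) :
  l != +oo -> u @ F --> l -> expeR (u t) @[t --> F] --> expeR l.
Proof.
case: l => [a| |] // _.
  move=> /fine_cvgP [ufin ucv]; apply/fine_cvgP; split.
    by apply: filterS ufin => t; case: (u t).
  have Efine : {near F, expR \o (fine \o u) =1 fine \o (fun t => expeR (u t))}.
    by apply: filterS ufin => t /=; case: (u t).
  apply: cvg_trans (near_eq_cvg Efine) _.
  exact: cvg_comp ucv (@continuous_expR R a).
move=> /cvgeNyPlt uNy; apply/fine_cvgP; split.
  by apply: filterS (uNy 0%R) => t; case: (u t).
apply/cvgrPdist_lt => e e0; apply: filterS (uNy (ln e)) => t /=.
case: (u t) => [r||] //= ; last by rewrite subr0 normr0.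
rewrite lte_fin sub0r normrN ger0_norm ?expR_ge0 // => ?.
by rewrite -(lnK e0) ltr_expR.
Qed.

Lemma poweR_expeR_lne (x : \bar R) (r : R) : x = -oo \/ 0 <= x -> (0 < r)%R ->
  x `^ r = expeR (r%:E * lne x).
Proof.
move=> x_ge0 r0; have r_neq0 : r != 0%R by rewrite gt_eqF.
case: x x_ge0 => [s| |] x_ge0; last 2 first.
- by rewrite poweRyr //= mulry gtr0_sg // mul1e.
- by rewrite poweRNyr //= mulrNy gtr0_sg // mul1e.
have [->|s0] := eqVneq s 0%R.
  by rewrite poweR_EFin powR0 // le0_lneNy // mulrNy gtr0_sg // mul1e.
have s_gt0 : (0 < s)%R by case: x_ge0 => //; rewrite lee_fin lt_def s0.
by rewrite lne_EFin // poweR_EFin /powR (negbTE s0).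
Qed.

End ExtendedReals.

Section Seminorms.
Context {R : realType} {X : tvsType R}.
Implicit Types (q : X -> R) (Gamma : set (X -> R)) (S : X -> X).

Lemma seminorm0 q : seminorm q -> q 0 = 0.
Proof. by case=> _ qZ; rewrite -(scale0r (0 : X)) qZ normr0 mul0r. Qed.

Lemma seminorm_ge0 q x : seminorm q -> 0 <= q x.
Proof.
move=> qsn; have [qD qZ] := qsn.
have qN : q (- x) = q x by rewrite -scaleN1r qZ normrN normr1 mul1r.
have := qD x (- x); rewrite subrr seminorm0 // qN -mulr2n.
by rewrite pmulrn_lge0.
Qed.

Lemma normG_ubound Gamma S q x :
  Gamma q -> q x <= 1 -> ((q (S x))%:E <= normG Gamma S)%E.
Proof. by move=> Gq qx1; apply: ereal_sup_ubound; exists q, x. Qed.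

Lemma ge_normG Gamma S c :
  (forall q x, Gamma q -> q x <= 1 -> q (S x) <= c) -> (normG Gamma S <= c%:E)%E.
Proof. by move=> Sc; apply: ge_ereal_sup => _ [q [x [Gq qx1 ->]]]; rewrite lee_fin Sc. Qed.

(* The [-oo] case is the supremum over an empty [Gamma]. *)
Lemma normG_Ny_or_ge0 Gamma S : (forall q, Gamma q -> seminorm q) ->
  normG Gamma S = -oo%E \/ (0 <= normG Gamma S)%E.
Proof.
move=> Gsn; have [[q Gq]|Gamma0] := pselect (exists q, Gamma q).
  right; apply: le_trans (normG_ubound S (x := 0) Gq _).
    rewrite lee_fin; apply: seminorm_ge0; exact: Gsn.
  by rewrite seminorm0 ?ler01 //; exact: Gsn.
left; rewrite /normG (_ : [set _ | _] = set0) ?ereal_sup0 //.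
by apply/seteqP; split => // y [q [x [Gq _ _]]]; apply: Gamma0; exists q.
Qed.

(* Test [S] on the rescaled vector [y / (q y + e / (c + 1))], of seminorm at most 1. *)
Lemma le_seminorm_normG Gamma S c q y :
  (forall q, Gamma q -> seminorm q) ->
  (forall (a : R) x, S (a *: x) = a *: S x) ->
  0 <= c -> (normG Gamma S <= c%:E)%E -> Gamma q -> q (S y) <= c * q y.
Proof.
move=> Gsn Sscale c0 Sc Gq; have [_ qZ] := Gsn _ Gq.
have qy0 : 0 <= q y by apply: seminorm_ge0; exact: Gsn.
apply/ler_addgt0Pr => e e0.
have c1 : 0 < c + 1 by rewrite ltr_wpDl.
pose k := q y + e / (c + 1).
have k0 : 0 < k by rewrite ltr_wpDl // divr_gt0.
have k_ge0 : 0 <= k^-1 by rewrite invr_ge0 ltW.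
have qky : q (k^-1 *: y) <= 1.
  by rewrite qZ ger0_norm // mulrC ler_pdivrMr // mul1r lerDl divr_ge0 // ltW.
have := le_trans (normG_ubound S Gq qky) Sc.
rewrite lee_fin Sscale qZ ger0_norm // mulrC ler_pdivrMr // => Sy.
apply: le_trans Sy _; rewrite /k mulrDr lerD2l mulrA ler_pdivrMr //.
by rewrite mulrDr mulr1 mulrC lerDl ltW.
Qed.

End Seminorms.

Lemma linear_scale {R : pzRingType} (U V : lmodType R) (f : U -> V) :
  (forall (a : R) x y, f (a *: x + y) = a *: f x + f y) ->
  forall (a : R) x, f (a *: x) = a *: f x.
Proof.
move=> flin a x; have f0 : f 0 = 0.
  have := flin 1 0 0; rewrite !scale1r !addr0.
  by move=> /(congr1 (fun v => v - f 0)); rewrite addrK subrr => <-.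
by rewrite -[a *: x]addr0 flin f0 addr0.
Qed.

Section GrowthBound.
Context {R : realType} {X : tvsType R}.
Variables (T : R -> X -> X) (Gamma : set (X -> R)).
Hypothesis Gamma_seminorm : forall q, Gamma q -> seminorm q.
Hypothesis T_linear : forall t, 0 <= t -> forall (a : R) x y, T t (a *: x + y) = a *: T t x + T t y.
Hypothesis T_semigroup : forall t s, 0 <= t -> 0 <= s -> T (t + s) = T t \o T s.

Definition growth_bound (M w : R) : Prop :=
  forall q t x, Gamma q -> 0 <= t -> q (T t x) <= M * expR (w * t) * q x.

Variables (w0 M0 : R).
Hypothesis M0_ge1 : 1 <= M0.
Hypothesis growth_w0 : growth_bound M0 w0.

Local Notation rate t := (lne (normG Gamma (T t)) * (t^-1)%:E)%E.

Lemma normG_T_le M w t : 1 <= M -> growth_bound M w -> 0 <= t ->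
  (normG Gamma (T t) <= (M * expR (w * t))%:E)%E.
Proof.
move=> M1 growth t0; apply: ge_normG => q x Gq qx1.
apply: le_trans (growth q t x Gq t0) _.
rewrite -[leRHS]mulr1 ler_wpM2l // mulr_ge0 ?expR_ge0 //.
exact: le_trans ler01 M1.
Qed.

Lemma rate_le M w t : 1 <= M -> growth_bound M w -> 0 < t ->
  (rate t <= (w + ln M / t)%:E)%E.
Proof.
move=> M1 growth t0; have M_gt0 : 0 < M by apply: lt_le_trans ltr01 M1.
have := lne_le_ln (mulr_gt0 M_gt0 (expR_gt0 _)) (normG_T_le M1 growth (ltW t0)).
rewrite lnM ?posrE ?expR_gt0 // expRK => lnN.
apply: le_trans (lee_wpmul2r _ lnN) _; first by rewrite lee_fin invr_ge0 ltW.
by rewrite -EFinM lee_fin mulrDl mulfK ?gt_eqF // addrC.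
Qed.

(* Iterate the one-step bound along [s = t + (s - t)] until the remainder falls in [[0, t[]. *)
Lemma growth_bound_of_step K w t : 0 < t ->
  (forall q y, Gamma q -> q (T t y) <= expR (w * t) * q y) ->
  (forall q s x, Gamma q -> 0 <= s -> s < t -> q (T s x) <= K * expR (w * s) * q x) ->
  growth_bound K w.
Proof.
move=> t0 step init q s x Gq s0.
have [n s_lt] : exists n : nat, s < n%:R * t.
  exists (Num.bound (s / t)); rewrite -ltr_pdivrMr //.
  by apply: archi_boundP; rewrite divr_ge0 // ltW.
elim: n s s0 s_lt x => [|n IHn] s s0 s_lt x.
  by rewrite mul0r ltNge s0 in s_lt.
have [|t_le_s] := ltP s t; first exact: init.
have s_split : s = t + (s - t) by rewrite addrC subrK.
have st_ge0 : 0 <= s - t by rewrite subr_ge0.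
have st_lt : s - t < n%:R * t.
  by rewrite ltrBlDl; move: s_lt; rewrite -natr1 mulrDl mul1r addrC.
rewrite {1}s_split T_semigroup ?(ltW t0) //=.
apply: le_trans (step q _ Gq) _.
apply: le_trans (ler_wpM2l (expR_ge0 _) (IHn _ st_ge0 st_lt x)) _.
have -> : expR (w * s) = expR (w * t) * expR (w * (s - t)).
  by rewrite -expRD -mulrDr -s_split.
by rewrite -mulrA mulrCA !mulrA.
Qed.

Lemma growth_bound_of_rate_lt t w : 0 < t -> (rate t < w%:E)%E ->
  exists2 M, 1 <= M & growth_bound M w.
Proof.
move=> t0 rate_lt.
have lnN_lt : (lne (normG Gamma (T t)) < (w * t)%:E)%E.
  move: rate_lt; rewrite -(@lte_pmul2r _ t%:E) ?lte_fin //.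
  by rewrite -muleA -EFinM mulVf ?gt_eqF // mule1 -EFinM.
have step q y : Gamma q -> q (T t y) <= expR (w * t) * q y.
  apply: le_seminorm_normG Gamma_seminorm _ (expR_ge0 _) _.
  - exact: linear_scale (T_linear (ltW t0)).
  - exact: ltW (lt_expR_of_lne_lt lnN_lt).
(* On [[0, t[] the a priori bound [M0 e^(w0 s)] is at most [M0 e^(|w0 - w| t) e^(w s)]. *)
exists (M0 * expR (`|w0 - w| * t)).
  apply: mulr_ege1 => //; apply: le_trans (expR_ge1Dx _).
  by rewrite lerDl mulr_ge0 // ltW.
apply: growth_bound_of_step t0 step _ => q s x Gq s0 s_lt.
apply: le_trans (growth_w0 x Gq s0) _.
rewrite (_ : M0 * _ * expR (w * s) = M0 * expR (`|w0 - w| * t + w * s));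
  last by rewrite expRD mulrA.
rewrite ler_wpM2r ?(seminorm_ge0 _ (Gamma_seminorm Gq)) //.
rewrite ler_wpM2l ?(le_trans ler01) // ler_expR -lerBlDr -mulrBl.
apply: le_trans (ler_wpM2r s0 (ler_norm _)) _.
by rewrite ler_wpM2l // ltW.
Qed.

Lemma omega0_le_growth_bound (M w : R) : 1 <= M -> growth_bound M w -> (omega0 Gamma T <= w%:E)%E.
Proof. by move=> M1 growth; apply: ereal_inf_lbound; exists w => //; exists M. Qed.

Lemma omega0_le_rate t : 0 < t -> (omega0 Gamma T <= rate t)%E.
Proof.
move=> t0; apply: lee_EFin_ub => r /(growth_bound_of_rate_lt t0) [M M1 growth].
exact: omega0_le_growth_bound M1 growth.
Qed.

Lemma rate_cvg_omega0 : rate t @[t --> +oo] --> omega0 Gamma T.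
Proof.
apply: cvge_lbound_ubounds.
- by rewrite lt_eqF // (le_lt_trans (omega0_le_growth_bound M0_ge1 growth_w0)) ?ltry.
- by near=> t; apply: omega0_le_rate; near: t; apply: nbhs_pinfty_gt; rewrite num_real.
move=> r /ereal_inf_lt [_ [w [M M1 growth] <-]]; rewrite lte_fin => w_lt_r.
near=> t.
have t0 : 0 < t by near: t; apply: nbhs_pinfty_gt; rewrite num_real.
apply: le_trans (rate_le M1 growth t0) _.
have t_large : ln M / (r - w) <= t by near: t; apply: nbhs_pinfty_ge; rewrite num_real.
by rewrite lee_fin -lerBrDl ler_pdivrMr // mulrC -ler_pdivrMr ?subr_gt0.
Unshelve. all: end_near. Qed.

Lemma omega0_eq_inf_rate :
  omega0 Gamma T = ereal_inf [set rate t | t in [set t : R | 0 < t]].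
Proof.
apply/eqP; rewrite eq_le; apply/andP; split.
  by apply: le_ereal_inf_tmp => _ [t t0 <-]; exact: omega0_le_rate.
apply: (cvge_ge _ rate_cvg_omega0); near=> t; apply: ereal_inf_lbound; exists t => //.
by near: t; apply: nbhs_pinfty_gt; rewrite num_real.
Unshelve. all: end_near. Qed.

Hypothesis T0_id : T 0 = id.

Lemma iter_T t n : 0 <= t -> iter n (T t) = T (n%:R * t).
Proof.
move=> t0; elim: n => [|n IHn]; first by rewrite mul0r T0_id.
apply: funext => x.
by rewrite iterS IHn -natr1 mulrDl mul1r addrC T_semigroup ?mulr_ge0.
Qed.

Lemma pow_normG_iter t n : 0 < t -> (0 < n)%N ->
  (normG Gamma (iter n (T t)) `^ n%:R^-1 = expeR (t%:E * rate (n%:R * t)))%E.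
Proof.
move=> t0 n0; rewrite iter_T ?ltW // poweR_expeR_lne ?invr_gt0 ?ltr0n //.
  congr expeR; rewrite muleCA -EFinM muleC; congr (_ * _)%E; congr EFin.
  by rewrite invfM mulrCA divff ?mulr1 // gt_eqF.
exact: normG_Ny_or_ge0.
Qed.

Lemma pow_normG_iter_cvg t : 0 < t ->
  (normG Gamma (iter n (T t)) `^ n%:R^-1)%E @[n --> \oo] --> expeR (t%:E * omega0 Gamma T).
Proof.
move=> t0.
have pow_eq : {near \oo, (fun n : nat => expeR (t%:E * rate (n%:R * t)))
    =1 (fun n : nat => normG Gamma (iter n (T t)) `^ n%:R^-1)%E}.
  by near=> n; rewrite pow_normG_iter //; near: n; exact: nbhs_infty_gt.
apply: cvg_trans (near_eq_cvg pow_eq) _; apply: cvg_expeR.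
  have := omega0_le_growth_bound M0_ge1 growth_w0.
  by case: (omega0 Gamma T) => //= _; rewrite mulrNy gtr0_sg // mul1e.
have nt_cvg : (n%:R * t) @[n --> \oo] --> +oo.
  exact: cvg_comp _ _ cvgr_idn (gt0_cvgMly t0 cvg_id).
have rate_nt := cvg_comp _ _ nt_cvg rate_cvg_omega0.
apply: cvg_comp rate_nt _; exact: mule_continuous.
Unshelve. all: end_near. Qed.

End GrowthBound.

Theorem proposition2p4 (R : realType) (X : tvsType R) (T : R -> X -> X)
  (Gamma : set (X -> R)) :
  frechet_space (X := X) ->
  C0_semigroup T -> exp_equicontinuous T ->
  fundamental_system Gamma ->
  (exists (w M : R), 1 <= M /\
     forall q t x, Gamma q -> 0 <= t -> q (T t x) <= M * expR (w * t) * q x) ->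
  forall t0 : R, 0 < t0 ->
  [/\ omega0 Gamma T =
        ereal_inf [set (lne (normG Gamma (T t)) * (t^-1)%:E)%E | t in [set t : R | 0 < t]],
      (lne (normG Gamma (T t)) * (t^-1)%:E)%E @[t --> +oo] --> omega0 Gamma T &
      exists L : \bar R,
        (normG Gamma (iter n (T t0)) `^ (n%:R^-1))%E @[n --> \oo] --> L /\
        omega0 Gamma T = (lne L * (t0^-1)%:E)%E].
Proof.
move=> _ [T_lin T_id T_semigroup _] _ [Gamma_sn _] [w0 [M0 [M0_ge1 growth_w0]]] t0 t0_gt0.
have Gamma_seminorm q : Gamma q -> seminorm q by move=> /Gamma_sn [].
have T_linear t : 0 <= t -> forall (a : R) x y, T t (a *: x + y) = a *: T t x + T t y.
  by move=> /T_lin [].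
split.
- exact (omega0_eq_inf_rate Gamma_seminorm T_linear T_semigroup M0_ge1 growth_w0).
- exact (rate_cvg_omega0 Gamma_seminorm T_linear T_semigroup M0_ge1 growth_w0).
exists (expeR (t0%:E * omega0 Gamma T)); split.
  exact (pow_normG_iter_cvg Gamma_seminorm T_linear T_semigroup M0_ge1 growth_w0 T_id t0_gt0).
by rewrite expeRK muleC muleA -EFinM mulVf ?gt_eqF // mul1e.
Qed.
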